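(* Let $m_0 = -468$ and $C_0 = -4330$, and let $P = 2^3\cdot 3\cdot 5\cdot 7\cdot 11\cdot 13\cdot 31\cdot 433\cdot 2017\cdot 3253\cdot 8501\cdot 32687\cdot 46649\cdot 4057231$. For $k\in\mathbb{Z}$, let $\mathcal{U}_k$ be the affine scheme over $\mathbb{Z}$ defined by $$(x^2-36)(y^2-36)(z^2-36) - m_0(xyz+C_0)^2 - k = 0.$$ If $k>0$ and $k\equiv 1\pmod P$, then $\mathcal{U}_k(\mathbf{A}_{\mathbb{Z}})\neq\emptyset$.
   Context: For an affine scheme $\mathcal{U}$ of finite type over $\mathbb{Z}$, $\mathcal{U}(\mathbf{A}_{\mathbb{Z}}) = \mathcal{U}(\mathbb{R})\times\prod_{p} \mathcal{U}(\mathbb{Z}_p)$, the product over all primes $p$. Thus the claim is that the equation has a real solution and a solution in $\mathbb{Z}_p^3$ for every prime $p$. *)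

From mathcomp Require Import all_boot all_order all_algebra.
From mathcomp Require Import reals.
Set Implicit Arguments. Unset Strict Implicit. Unset Printing Implicit Defensive.
Import Order.TTheory GRing.Theory Num.Theory.
Local Open Scope ring_scope.

Definition m0 : int := - 468.
Definition C0 : int := - 4330.

Definition P : int :=
  (2 ^ 3 * 3 * 5 * 7 * 11 * 13 * 31 * 433 * 2017 * 3253 * 8501
     * 32687 * 46649 * 4057231)%N%:Z.

Definition Fk (R : comNzRingType) (k : int) (x y z : R) : R :=
  (x ^+ 2 - 36) * (y ^+ 2 - 36) * (z ^+ 2 - 36)
  - m0%:~R * (x * y * z + C0%:~R) ^+ 2 - k%:~R.

(* A p-adic integer, as an element of the inverse limit Z_p = lim Z/p^n Z:
   a sequence of integers a n (representing a class mod p^n) with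
   a (n+1) = a n mod p^n. *)
Definition padic_int (p : nat) (a : nat -> int) : Prop :=
  forall n : nat, (a n.+1 == a n %[mod (p ^ n)%N%:Z])%Z.

(* A Z_p-point of U_k: a triple of p-adic integers at which the polynomial
   vanishes in Z_p, i.e. in every component Z/p^n Z of the inverse limit
   (ring operations on the inverse limit are componentwise). *)
Definition Zp_point (p : nat) (k : int) : Prop :=
  exists x y z : nat -> int,
    [/\ padic_int p x, padic_int p y, padic_int p z &
        forall n : nat, ((p ^ n)%N%:Z %| Fk k (x n) (y n) (z n))%Z].

Definition real_point (R : realType) (k : int) : Prop :=
  exists x y z : R, Fk k x y z = 0.

From mathcomp Require Import all_boot all_order all_algebra.
From mathcomp Require Import reals.
From mathcomp Require Import ring.
Import Order.TTheory GRing.Theory Num.Theory.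
Local Open Scope ring_scope.

(* As a polynomial in [z], [Fk k x y z] is a quadratic [A z^2 + B z + C] with
   [A = (x^2-36)(y^2-36) - m0 x^2 y^2]. Over the reals, [z = 6] kills the triple
   product and leaves [-m0 (6xy + C0)^2 - k], which has a root since
   [m0 < 0 < k]. Over [Z_p] we lift a root of [F_k mod p] by Hensel's lemma in
   [z]. For [p] outside [{2, 3, 5, 13, 433}] one can take [x = 12], [y = 6i]
   with [25 i = 1 mod p]: then [A = 0 mod p] while [B] is a unit, so [F_k mod p]
   is linear in [z] with a simple root. For the five exceptional primes we
   exhibit approximate roots of [F_1] modulo [p^(2e+1)] whose [z]-derivative
   has valuation exactly [e]; they serve for every [k] since [p^(2e+1) | P]. *)

Lemma natzX (p n : nat) : (p ^ n)%N%:Z = p%:Z ^+ n.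
Proof. by rewrite -!natz natrX. Qed.

Section HenselQuadratic.

Variables (p : nat) (A B C : int).
Let q := p%:Z.

Let f (z : int) := A * z ^+ 2 + B * z + C.
Let f' (z : int) := 2 * A * z + B.

Lemma quad_shift z h : f (z - h) = f z - h * f' z + A * h ^+ 2.
Proof. rewrite /f /f'; ring. Qed.

Lemma quad'_shift z h : f' (z - h) = f' z - 2 * A * h.
Proof. rewrite /f'; ring. Qed.

Variables (e : nat) (a u v : int).
Hypothesis fa : (q ^+ (2 * e + 1) %| f a)%Z.
Hypothesis f'a : f' a = q ^+ e * u.
Hypothesis uv : (q %| u * v - 1)%Z.

(* Newton's iteration, with [v] standing for [1 / u] modulo [q]. *)
Fixpoint newton (m : nat) : int :=
  if m is m'.+1 then
    newton m' - q ^+ (e + 1 + m') * ((f (newton m') %/ q ^+ (2 * e + 1 + m'))%Z * v)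
  else a.

Lemma newton_invariant m :
  (q ^+ (2 * e + 1 + m) %| f (newton m))%Z /\ (q ^+ (e + 1) %| f' (newton m) - f' a)%Z.
Proof.
elim: m => [|m [fm f'm]] /=; first by rewrite addn0 fa subrr dvdz0.
have Et : q ^+ (e + 1 + m) = q ^+ e * q * q ^+ m by rewrite !exprD expr1.
have ET : q ^+ (2 * e + 1 + m) = q ^+ e * q ^+ e * q * q ^+ m.
  by rewrite mul2n -addnn !exprD expr1.
set r := (f (newton m) %/ _)%Z.
have Er : f (newton m) = r * (q ^+ e * q ^+ e * q * q ^+ m) by rewrite -ET divzK.
have [w Ew] := dvdzP f'm; have [s Es] := dvdzP uv.
rewrite addn1 exprSr f'a in Ew.
have Ef' : f' (newton m) = q ^+ e * u + w * (q ^+ e * q) by rewrite -Ew; ring.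
rewrite [(2 * e + 1 + m.+1)%N]addnS exprSr ET Et; split; apply/dvdzP.
  exists (- r * s - r * v * w + A * q ^+ m * r ^+ 2 * v ^+ 2).
  rewrite quad_shift Ef' Er.
  have {1}-> : r = r * (u * v) - r * (s * q) by rewrite -Es; ring.
  ring.
exists (w - 2 * A * q ^+ m * r * v).
by rewrite quad'_shift Ef' f'a addn1 exprSr; ring.
Qed.

Lemma hensel_quadratic :
  exists z : nat -> int, padic_int p z /\ forall n, ((p ^ n)%N%:Z %| f (z n))%Z.
Proof.
exists newton; split=> n.
  rewrite eqz_mod_dvd /= natzX addrAC subrr add0r addnC exprD.
  by rewrite rpredN -mulrA dvdz_mulr.
rewrite natzX; apply: dvdz_trans (proj1 (newton_invariant n)).
by rewrite addnC exprD dvdz_mulr.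
Qed.

End HenselQuadratic.

Lemma hensel_quadratic_simple_root (p : nat) (A B C v : int) :
  (p%:Z %| A)%Z -> (p%:Z %| B * v - 1)%Z ->
  exists z : nat -> int, padic_int p z /\
    forall n, ((p ^ n)%N%:Z %| A * z n ^+ 2 + B * z n + C)%Z.
Proof.
move=> pA pBv; set a := - C * v.
apply: (@hensel_quadratic p A B C 0 a (2 * A * a + B) v).
- have -> : A * a ^+ 2 + B * a + C = A * a ^+ 2 - C * (B * v - 1) by rewrite /a; ring.
  by rewrite muln0 expr1; apply: rpredB; [exact: dvdz_mulr | exact: dvdz_mull].
- by rewrite /= mul1r.
- have -> : (2 * A * a + B) * v - 1 = A * (2 * a * v) + (B * v - 1) by ring.
  by rewrite rpredD ?dvdz_mulr.
Qed.

Lemma unit_mod_prime (p : nat) (b : int) : prime p -> ~~ (p %| `|b|)%N ->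
  exists c : int, (p%:Z %| b * c - 1)%Z.
Proof.
move=> p_prime p_ndvd_b.
have : coprimez p%:Z b by rewrite coprimezE /= prime_coprime.
case/coprimezP=> [[c d] /= Ebezout].
by exists d; apply/dvdzP; exists (- c); rewrite -Ebezout; ring.
Qed.

Definition Fz2 (x y : int) : int := (x ^+ 2 - 36) * (y ^+ 2 - 36) - m0 * x ^+ 2 * y ^+ 2.
Definition Fz1 (x y : int) : int := - 2 * m0 * C0 * x * y.
Definition Fz0 (k x y : int) : int := - 36 * (x ^+ 2 - 36) * (y ^+ 2 - 36) - m0 * C0 ^+ 2 - k.

Lemma Fk_quadratic (k x y z : int) :
  Fk k x y z = Fz2 x y * z ^+ 2 + Fz1 x y * z + Fz0 k x y.
Proof. rewrite /Fk /Fz2 /Fz1 /Fz0 !intz; ring. Qed.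

Lemma Zp_point_of_z_lift (p : nat) (k x y : int) :
  (exists z : nat -> int, padic_int p z /\
     forall n, ((p ^ n)%N%:Z %| Fz2 x y * z n ^+ 2 + Fz1 x y * z n + Fz0 k x y)%Z) ->
  Zp_point p k.
Proof.
case=> z [z_padic z_root]; exists (fun=> x), (fun=> y), z.
by split=> // n; rewrite Fk_quadratic.
Qed.

(* The congruences are given by explicit cofactors [W] and [s] so that instances
   are checked by [ring] rather than by computing with unary integers. *)
Lemma Zp_point_of_certificate (p e : nat) (k x y a W u v s : int) :
  (p%:Z ^+ (2 * e + 1) %| k - 1)%Z ->
  Fk 1 x y a = W * p%:Z ^+ (2 * e + 1) ->
  2 * Fz2 x y * a + Fz1 x y = p%:Z ^+ e * u ->
  u * v - 1 = s * p%:Z ->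
  Zp_point p k.
Proof.
move=> pk Fa f'a uv; apply: (@Zp_point_of_z_lift p k x y).
apply: (@hensel_quadratic p _ _ _ e a u v _ f'a); last by rewrite uv dvdz_mull.
have -> : Fz2 x y * a ^+ 2 + Fz1 x y * a + Fz0 k x y = Fk 1 x y a - (k - 1).
  by rewrite Fk_quadratic /Fz0; ring.
by rewrite Fa rpredB ?dvdz_mull.
Qed.

(* Syntactic matching ([constr_eq]): unifying a small factor with one of the
   large numerals of [P] would unfold both to unary. *)
Ltac dvdn_factor :=
  repeat match goal with
  | |- is_true (dvdn ?d (muln _ ?e)) => constr_eq d e; exact: dvdn_mull (dvdnn d)
  | |- is_true (dvdn ?d (muln _ _)) => apply: dvdn_mulr
  | |- is_true (dvdn ?d ?d) => exact: dvdnn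
  end.

Lemma exceptional_dvd_P (d : nat) : d \in [:: 2 ^ 3; 3; 5; 13; 433]%N -> (d%:Z %| P)%Z.
Proof.
rewrite dvdzE !absz_nat !inE.
by case/or4P=> [| | | /orP[]] /eqP->; dvdn_factor.
Qed.

Ltac certificate_ring := rewrite /Fk /Fz2 /Fz1 /m0 /C0 ?intz; ring.

Lemma Zp_point_exceptional (p : nat) (k : int) :
  p \in [:: 2; 3; 5; 13; 433]%N -> (k == 1 %[mod P])%Z -> Zp_point p k.
Proof.
rewrite eqz_mod_dvd => + P_dvd.
have dvd_k1 e : (p ^ (2 * e + 1))%N \in [:: 2 ^ 3; 3; 5; 13; 433]%N ->
    (p%:Z ^+ (2 * e + 1) %| k - 1)%Z.
  by rewrite -natzX => /exceptional_dvd_P/dvdz_trans; apply.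
rewrite !inE => /or4P[| | | /orP[]] /eqP p_eq; rewrite p_eq in dvd_k1 *.
- apply: (@Zp_point_of_certificate 2 1 k 1 1 1 1096298739%:Z (- 2024747%:Z) 1 (- 1012374%:Z));
    [by apply: dvd_k1 | certificate_ring..].
- apply: (@Zp_point_of_certificate 3 0 k 1 1 1 2923463304%:Z (- 4049494%:Z) 2 (- 2699663%:Z));
    [by apply: dvd_k1 | certificate_ring..].
- apply: (@Zp_point_of_certificate 5 0 k 0 2 2 1754889667%:Z 4608%:Z 2 1843%:Z);
    [by apply: dvd_k1 | certificate_ring..].
- apply: (@Zp_point_of_certificate 13 0 k 0 1 3 674957783%:Z 7560%:Z 2 1163%:Z);
    [by apply: dvd_k1 | certificate_ring..].
- apply: (@Zp_point_of_certificate 433 0 k 0 1 76 20281103%:Z 191520%:Z 391 172943%:Z);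
    [by apply: dvd_k1 | certificate_ring..].
Qed.

Lemma Zp_point_generic (p : nat) (k : int) :
  prime p -> p \notin [:: 2; 3; 5; 13; 433]%N -> Zp_point p k.
Proof.
move=> p_prime; rewrite !inE !negb_or => /and5P[p2 p3 p5 p13 p433].
have p_ndvd l : prime l -> p != l -> ~~ (p %| l)%N by move=> l_prime; rewrite dvdn_prime2.
have [i Ei] : exists i, (p%:Z %| 25 * i - 1)%Z.
  apply: unit_mod_prime => //.
  by rewrite (_ : `|25|%N = 5 ^ 2)%N // Euclid_dvdX // andbT p_ndvd.
(* [Fz1 12 (6 i) = - 2^7 3^4 5 13 433 i] *)
have [j Ej] : exists j, (p%:Z %| (2 ^+ 7 * 3 ^+ 4 * 5 * 13 * 433) * j - 1)%Z.
  by apply: unit_mod_prime => //; rewrite !abszM !Euclid_dvdM // !negb_or !p_ndvd.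
apply: (@Zp_point_of_z_lift p k 12 (6 * i)).
apply: (@hensel_quadratic_simple_root _ _ _ _ (- 25 * j)).
  rewrite (_ : Fz2 _ _ = (25 * i - 1) * (3888 * (25 * i + 1))); last by rewrite /Fz2 /m0; ring.
  exact: dvdz_mulr.
rewrite (_ : _ * _ - 1 = (25 * i - 1) * ((2 ^+ 7 * 3 ^+ 4 * 5 * 13 * 433) * j)
                         + ((2 ^+ 7 * 3 ^+ 4 * 5 * 13 * 433) * j - 1)).
  by rewrite rpredD ?dvdz_mulr.
by rewrite /Fz1 /m0 /C0; ring.
Qed.

Lemma real_point_pos (R : realType) (k : int) : 0 < k -> real_point R k.
Proof.
move=> k_gt0; set s : R := Num.sqrt (k%:~R / 468).
have s2 : s ^+ 2 = k%:~R / 468 by rewrite sqr_sqrtr // divr_ge0 // ler0z ltW.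
exists ((4330 + s) / 6), 1, 6.
have -> : Fk k ((4330 + s) / 6) 1 6 = 468 * s ^+ 2 - k%:~R.
  by rewrite /Fk /m0 /C0; field.
by rewrite s2 mulrC divfK ?subrr // pnatr_eq0.
Qed.

Theorem proposition5p1 (R : realType) (k : int) :
  0 < k -> (k == 1 %[mod P])%Z ->
  real_point R k /\ (forall p : nat, prime p -> Zp_point p k).
Proof.
move=> k_gt0 k_mod; split=> [|p p_prime]; first exact: real_point_pos.
case: (boolP (p \in [:: 2; 3; 5; 13; 433]%N)) => [p_exceptional | p_generic].
  exact: Zp_point_exceptional.
exact: Zp_point_generic.
Qed.
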